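(* Let $(M,s)$ be an initial $\mathbf{S5}$-state of a definite action theory such that every $u\in M[S]$ is reachable from $s$. Let $u,v\in M[S]$ with $M[\pi](u)=M[\pi](v)$. Then for every agent $i$ and every $x\in M[S]$ with $(u,x)\in M[i]$ there exists $y\in M[S]$ with $(v,y)\in M[i]$ and $M[\pi](x)=M[\pi](y)$.
   Context: Agents $\mathcal{AG}=\{1,\dots,n\}$, finite set of fluents $\mathcal F$. Belief formulae are built from propositional (fluent) formulae over $\mathcal F$ with $\mathbf B_i$, Boolean connectives and $\mathbf E_\alpha,\mathbf C_\alpha$; $\mathbf C=\mathbf C_{\mathcal{AG}}$. Kripke structures $M$: worlds $M[S]$, interpretations $M[\pi](u)\subseteq\mathcal F$, relations $M[i]$; state $(M,s)$; standard semantics ($\mathbf B_i\varphi$: $\varphi$ at all $M[i]$-successors; $\mathbf E_\alpha$: all $\mathbf B_i$, $i\in\alpha$; $\mathbf C_\alpha\varphi$: $\mathbf E^k_\alpha\varphi$ for all $k\ge0$). $\mathbf{S5}$-state: every $M[i]$ an equivalence relation. $v$ is reachable from $u$ if connected by a finite (possibly empty) chain of pairs each in some $M[j]$. An action theory $(I,D)$ consists of a domain $D$ (action descriptions) and a set $I$ of statements ''initially $\varphi$''; an initial $\mathbf{S5}$-state of it is an $\mathbf{S5}$-state satisfying every $\varphi$ with ''initially $\varphi$'' $\in I$. It is definite if every statement of $I$ is of one of the forms initially $\varphi$, initially $\mathbf C\varphi$, initially $\mathbf C(\mathbf B_i\varphi)$, initially $\mathbf C(\mathbf B_i\varphi\vee\mathbf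 B_i\neg\varphi)$, initially $\mathbf C(\neg\mathbf B_i\varphi\wedge\neg\mathbf B_i\neg\varphi)$ ($\varphi$ fluent formula, $i$ agent), and for every fluent formula $\varphi$ and agent $i$, $I$ contains a statement of one of the last three forms with this $i$ and $\varphi$. *)

From mathcomp Require Import all_boot.
Set Implicit Arguments.
Unset Strict Implicit.
Unset Printing Implicit Defensive.

Section Syntax.
Variables (n : nat) (F : finType).

Inductive fform : Type :=
| FAtom of F
| FNot of fform
| FAnd of fform & fform
| FOr of fform & fform.

Inductive bform : Type :=
| BFl of fform
| BB of 'I_n & bform
| BNot of bform
| BAnd of bform & bform
| BOr of bform & bform
| BE of {set 'I_n} & bform
| BC of {set 'I_n} & bform.

Definition BCall (phi : bform) : bform := BC [set: 'I_n] phi.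
End Syntax.

Section Semantics.
Variables (n : nat) (F : finType) (W : Type)
          (R : 'I_n -> W -> W -> Prop) (pi : W -> {set F}).

Fixpoint fsat (u : W) (phi : fform F) : Prop :=
  match phi with
  | FAtom f => f \in pi u
  | FNot p => ~ fsat u p
  | FAnd p q => fsat u p /\ fsat u q
  | FOr p q => fsat u p \/ fsat u q
  end.

Definition Eop (al : {set 'I_n}) (P : W -> Prop) (u : W) : Prop :=
  forall i, i \in al -> forall t, R i u t -> P t.

Fixpoint Eiter (al : {set 'I_n}) (k : nat) (P : W -> Prop) : W -> Prop :=
  match k with
  | 0 => P
  | k'.+1 => Eop al (Eiter al k' P)
  end.

Fixpoint bsat (u : W) (phi : bform n F) : Prop :=
  match phi with
  | BFl p => fsat u p
  | BB i p => forall t, R i u t -> bsat t p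
  | BNot p => ~ bsat u p
  | BAnd p q => bsat u p /\ bsat u q
  | BOr p q => bsat u p \/ bsat u q
  | BE al p => Eop al (fun t => bsat t p) u
  | BC al p => forall k, Eiter al k (fun t => bsat t p) u
  end.

Definition is_equiv (r : W -> W -> Prop) : Prop :=
  (forall x, r x x) /\ (forall x y, r x y -> r y x) /\
  (forall x y z, r x y -> r y z -> r x z).

Definition S5 : Prop := forall i, is_equiv (R i).

Inductive reachable (u : W) : W -> Prop :=
| reach_refl : reachable u u
| reach_step : forall v w j, reachable u v -> R j v w -> reachable u w.
End Semantics.

(* The initial statements I of an action theory, as the set of formulae phi
   with "initially phi" in I. *)
Definition definite (n : nat) (F : finType) (I : bform n F -> Prop) : Prop :=
  (forall phi, I phi ->
     (exists p, phi = BFl n p) \/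
     (exists p, phi = BCall (BFl n p)) \/
     (exists i p, phi = BCall (BB i (BFl n p))) \/
     (exists i p, phi = BCall (BOr (BB i (BFl n p)) (BB i (BFl n (FNot p))))) \/
     (exists i p, phi = BCall (BAnd (BNot (BB i (BFl n p)))
                                    (BNot (BB i (BFl n (FNot p)))))))
  /\
  (forall (p : fform F) (i : 'I_n),
     I (BCall (BB i (BFl n p))) \/
     I (BCall (BOr (BB i (BFl n p)) (BB i (BFl n (FNot p))))) \/
     I (BCall (BAnd (BNot (BB i (BFl n p))) (BNot (BB i (BFl n (FNot p))))))).

Definition initial_S5_state (n : nat) (F : finType) (I : bform n F -> Prop)
  (W : Type) (R : 'I_n -> W -> W -> Prop) (pi : W -> {set F}) (s : W) : Prop :=
  S5 R /\ forall phi, I phi -> bsat R pi s phi.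

From mathcomp Require Import all_boot.
From Stdlib Require Import Classical.

Set Implicit Arguments.
Unset Strict Implicit.
Unset Printing Implicit Defensive.

(* Since F is finite, the interpretation of x is described by a single fluent
   formula chi.  Definiteness puts one of C(B_i chi), C(B_i chi \/ B_i ~chi) or
   C(~B_i chi /\ ~B_i ~chi) into I, and as every world is reachable from s each
   of them holds at every world.  In the first two cases agent i believes chi
   at u, so by reflexivity u itself satisfies chi and v is the required
   successor of v; in the third, ~B_i ~chi at v yields an i-successor of v
   satisfying chi. *)

Section CommonBelief.
Variables (n : nat) (F : finType) (W : Type)
          (R : 'I_n -> W -> W -> Prop) (pi : W -> {set F}).

Lemma Eiter_Eop (al : {set 'I_n}) (k : nat) (Q : W -> Prop) (u : W) :
  Eiter R al k.+1 Q u -> Eiter R al k (Eop R al Q) u.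
Proof.
elim: k u => [|k IHk] u //= Hu i Hi t Rut.
exact: IHk (Hu i Hi t Rut).
Qed.

Lemma Eiter_reachable (s w : W) (Q : W -> Prop) :
  reachable R s w -> (forall k, Eiter R [set: 'I_n] k Q s) -> Q w.
Proof.
move=> Hsw; elim: Hsw Q => [|v w' j _ IHv Rvw] Q HQ; first exact: (HQ 0).
have HEQ : Eop R [set: 'I_n] Q v.
  by apply: IHv => k; apply: Eiter_Eop; exact: HQ.
exact: HEQ j (in_setT j) w' Rvw.
Qed.

Lemma bsat_BCall_reachable (s w : W) (phi : bform n F) :
  reachable R s w -> bsat R pi s (BCall phi) -> bsat R pi w phi.
Proof. exact: Eiter_reachable. Qed.

End CommonBelief.

Section CharacteristicFormula.
Variables (F : finType) (W : Type) (pi : W -> {set F}).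

Definition fliteral (A : {set F}) (f : F) : fform F :=
  if f \in A then FAtom f else FNot (FAtom f).

(* The seed [f0] only makes the conjunction nonempty: there is no constant
   true formula, and f0 occurs in [enum F] anyway. *)
Definition char_form (A : {set F}) (f0 : F) : fform F :=
  foldr (fun f p => FAnd (fliteral A f) p) (fliteral A f0) (enum F).

Lemma fsat_fliteral (A : {set F}) (f : F) (w : W) :
  fsat pi w (fliteral A f) <-> (f \in pi w) = (f \in A).
Proof.
rewrite /fliteral; case: (f \in A) => /=; first by [].
by split=> [/negP/negbTE | ->].
Qed.

Lemma fsat_foldr_fliteral (A : {set F}) (base : fform F) (s : seq F) (w : W) :
  fsat pi w (foldr (fun f p => FAnd (fliteral A f) p) base s) <->
  fsat pi w base /\ forall f, f \in s -> (f \in pi w) = (f \in A).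
Proof.
elim: s => [|g s IHs] /=; first by split=> [H | []].
rewrite fsat_fliteral IHs; split=> [[Hg [Hb Hs]] | [Hb Hgs]].
  by split=> // f; rewrite inE => /orP [/eqP -> | /Hs].
by split; [apply: Hgs; rewrite mem_head | split=> // f Hf; apply: Hgs; rewrite inE Hf orbT].
Qed.

Lemma fsat_char_form (A : {set F}) (f0 : F) (w : W) :
  fsat pi w (char_form A f0) <-> pi w = A.
Proof.
rewrite fsat_foldr_fliteral fsat_fliteral; split=> [[_ H] | ->] //.
by apply/setP => f; apply: H; rewrite mem_enum.
Qed.

End CharacteristicFormula.

Theorem lemma12 (n : nat) (F : finType) (I : bform n F -> Prop)
  (W : Type) (R : 'I_n -> W -> W -> Prop) (pi : W -> {set F}) (s : W) :
  definite I ->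
  initial_S5_state I R pi s ->
  (forall u : W, reachable R s u) ->
  forall u v : W, pi u = pi v ->
  forall (i : 'I_n) (x : W), R i u x ->
  exists y : W, R i v y /\ pi x = pi y.
Proof.
move=> [_ Hdef] [HS5 Hsat] Hreach u v Huv i x Rux.
have [Rrefl _] := HS5 i.
have HC phi w : I (BCall phi) -> bsat R pi w phi.
  by move=> /Hsat; apply: bsat_BCall_reachable (Hreach w).
case: (pickP (@predT F)) => [f0 _ | F0]; last first.
  by exists v; split=> //; apply/setP => f; have := F0 f.
pose chi := char_form (pi x) f0.
have believes_at_u : (forall t, R i u t -> fsat pi t chi) ->
    exists y, R i v y /\ pi x = pi y.
  move=> Hu; exists v; split=> //.
  by rewrite -Huv; symmetry; apply/fsat_char_form/Hu.
have chi_x : fsat pi x chi by apply/fsat_char_form.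
case: (Hdef chi i) => [/(HC _ u) | [/(HC _ u) /= [|Hneg] | /(HC _ v) /= [_ Hv]]].
1, 2: exact: believes_at_u.
- by case: (Hneg x Rux chi_x).
- apply: NNPP => Hnone; apply: Hv => t Rvt Ht; apply: Hnone.
  by exists t; split=> //; symmetry; move/fsat_char_form: Ht.
Qed.
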